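(* Let $p,r$ be positive integers and $s=p+2r$. Let $\Phi:U_{ps}(\mathbb{R})\to\mathbb{C}^{r\times p}$ be the map $\Phi(X)=WA^{-1}$, where for $X=(X_0;X_1;X_2;X_3)$ (blocks of $p,p,r,r$ rows) $A=X_0-X_1$ and $W=X_2+iX_3$. Then the complex valued components of $\Phi$ form an orthogonal harmonic family of $\mathbf{GL}_p(\mathbb{R})$-invariant functions on $U_{ps}(\mathbb{R})$, equipped with the semi-Euclidean metric.
   Context: $U_{ps}(\mathbb{R})=\{X\in\mathbb{R}^{(p+s)\times p}: -X_0^tX_0+X_1^tX_1+X_2^tX_2+X_3^tX_3 \text{ is negative definite}\}$; on it $A$ is invertible. $\mathbf{GL}_p(\mathbb{R})$ acts by right multiplication. The semi-Euclidean metric is $(X,Y)=\mathrm{trace}(X^t\mathrm{diag}(-I_p,I_s)Y)$. For a semi-Riemannian manifold $(M,g)$ and complex functions $\phi,\psi$, $\tau(\phi)$ is the Laplace–Beltrami operator (extended complex-linearly) and $\kappa(\phi,\psi)=g(\mathrm{grad}\,\phi,\mathrm{grad}\,\psi)$ with $g$ extended complex-bilinearly. A set $\Omega$ of complex functions is an orthogonal harmonic family if $\tau(\phi)=0$ and $\kappa(\phi,\psi)=0$ for all $\phi,\psi\in\Omega$. *)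

From HB Require Import structures.
From mathcomp Require Import all_boot all_order all_algebra.
From mathcomp Require Import all_classical all_reals all_analysis.
Set Implicit Arguments. Unset Strict Implicit. Unset Printing Implicit Defensive.
Import Order.TTheory GRing.Theory Num.Theory.
Import numFieldNormedType.Exports.
Local Open Scope ring_scope.
Local Open Scope classical_set_scope.

Section Defs.
Variables (R : realType) (p r : nat).

Definition s := p + (r + r).
Definition Mat := 'M[R]_(p + (p + (r + r)), p).

Definition X0 (X : Mat) : 'M[R]_(p, p) := usubmx X.
Definition X1 (X : Mat) : 'M[R]_(p, p) := usubmx (dsubmx X).
Definition X2 (X : Mat) : 'M[R]_(r, p) := usubmx (dsubmx (dsubmx X)).
Definition X3 (X : Mat) : 'M[R]_(r, p) := dsubmx (dsubmx (dsubmx X)).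

Definition negdef (M : 'M[R]_p) : Prop :=
  forall v : 'cV[R]_p, v != 0 -> (v^T *m M *m v) 0 0 < 0.

Definition Ups : set Mat :=
  [set X | negdef (- ((X0 X)^T *m X0 X) + (X1 X)^T *m X1 X
                   + (X2 X)^T *m X2 X + (X3 X)^T *m X3 X)].

Definition Amat (X : Mat) : 'M[R]_p := X0 X - X1 X.

Definition PhiRe (X : Mat) : 'M[R]_(r, p) := X2 X *m invmx (Amat X).
Definition PhiIm (X : Mat) : 'M[R]_(r, p) := X3 X *m invmx (Amat X).

(* A complex valued function on Mat, as (real part, imaginary part). *)
Definition cfun := ((Mat -> R) * (Mat -> R))%type.

(* signature of the semi-Euclidean metric trace(X^t diag(-I_p, I_s) Y) *)
Definition eps (i : 'I_(p + (p + (r + r)))) : R := if (i < p)%N then -1 else 1.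

Definition pd (i : 'I_(p + (p + (r + r)))) (j : 'I_p) (f : Mat -> R) : Mat -> R :=
  fun X => 'D_(delta_mx i j : Mat) f X.

(* Laplace-Beltrami operator of the (flat) semi-Euclidean metric, real case *)
Definition rtau (f : Mat -> R) : Mat -> R :=
  fun X => \sum_(i < p + (p + (r + r))) \sum_(j < p) eps i * pd i j (pd i j f) X.

Definition rkappa (f h : Mat -> R) : Mat -> R :=
  fun X => \sum_(i < p + (p + (r + r))) \sum_(j < p) eps i * (pd i j f X * pd i j h X).

Definition ctau (phi : cfun) : cfun := (rtau phi.1, rtau phi.2).

(* complex-bilinear extension of kappa *)
Definition ckappa (phi psi : cfun) : cfun :=
  (fun X => rkappa phi.1 psi.1 X - rkappa phi.2 psi.2 X,
   fun X => rkappa phi.1 psi.2 X + rkappa phi.2 psi.1 X).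

(* smoothness needed to make sense of tau, kappa (at least C^2-type derivability
   along every coordinate) *)
Definition coord_twice_derivable (U : set Mat) (f : Mat -> R) : Prop :=
  forall X, U X -> forall i j,
    derivable f X (delta_mx i j : Mat) /\ derivable (pd i j f) X (delta_mx i j : Mat).

Definition orthogonal_harmonic_family (U : set Mat) (Omega : set cfun) : Prop :=
  forall phi psi, Omega phi -> Omega psi ->
    (forall X, U X -> (ctau phi).1 X = 0 /\ (ctau phi).2 X = 0) /\
    (forall X, U X -> (ckappa phi psi).1 X = 0 /\ (ckappa phi psi).2 X = 0).

Definition Phi_comp (a : 'I_r) (b : 'I_p) : cfun :=
  (fun X => PhiRe X a b, fun X => PhiIm X a b).

Definition Phi_components : set cfun := [set Phi_comp a b | a in setT & b in setT].

Definition GLp_invariant (U : set Mat) (phi : cfun) : Prop :=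
  forall X (g : 'M[R]_p), U X -> g \in unitmx ->
    U (X *m g) /\ phi.1 (X *m g) = phi.1 X /\ phi.2 (X *m g) = phi.2 X.

End Defs.

From HB Require Import structures.
From mathcomp Require Import all_boot all_order all_algebra.
From mathcomp Require Import ring lra.
From mathcomp Require Import all_classical all_reals all_analysis.

Set Implicit Arguments. Unset Strict Implicit. Unset Printing Implicit Defensive.
Import Order.TTheory GRing.Theory Num.Theory.
Import numFieldNormedType.Exports.
Local Open Scope ring_scope.
Local Open Scope classical_set_scope.

(* Along a coordinate direction of the X0 or X1 block, A moves by +-e_i e_j^T
   while W stays fixed, so by the Sherman-Morrison formula every entry of W A^-1
   is a Moebius function of the parameter: its first derivative is -+c and its
   second is 2 d c, where c = (W A^-1)_ai (A^-1)_jb and d = (A^-1)_ji do not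
   depend on the sign.  The metric weighs X0 by -1 and X1 by +1, so these
   contributions cancel both in tau and in kappa.  Along X2 and X3 the entries
   are affine in X, so their second derivatives vanish, and kappa reduces to a
   sum over the (X2; X3) coordinates in which the real and imaginary parts enter
   with opposite signs (i^2 = -1) while the mixed terms vanish.  Invariance:
   (W g) (A g)^-1 = W A^-1, and the defining quadratic form becomes g^T N g.
   Finally A is invertible on U_ps, since A v = 0 gives v^T N v >= 0. *)

Section RankOneUpdate.
Variable F : fieldType.

Lemma mulmx_deltaE m n k (M : 'M[F]_(m, n)) (i : 'I_n) (j : 'I_k) x y :
  (M *m delta_mx i j) x y = M x i * (j == y)%:R.
Proof.
rewrite mxE (bigD1 i) //= big1 ?addr0 => [|i' /negbTE ni'i].
  by rewrite mxE eqxx eq_sym.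
by rewrite mxE ni'i mulr0.
Qed.

Lemma delta_mulmxE m n k (N : 'M[F]_(n, k)) (i : 'I_m) (j : 'I_n) x y :
  (delta_mx i j *m N) x y = (x == i)%:R * N j y.
Proof.
rewrite mxE (bigD1 j) //= big1 ?addr0 => [|j' /negbTE nj'j].
  by rewrite mxE eqxx andbT.
by rewrite mxE nj'j andbF mul0r.
Qed.

Lemma mulmx_delta_mulmxE m n k l (M : 'M[F]_(m, n)) (N : 'M[F]_(k, l)) i j x y :
  (M *m delta_mx i j *m N) x y = M x i * N j y.
Proof.
rewrite -mulmxA mxE (bigD1 i) //= big1 ?addr0 => [|i' /negbTE ni'i].
  by rewrite delta_mulmxE eqxx mul1r.
by rewrite delta_mulmxE ni'i mul0r mulr0.
Qed.

Lemma invmx_add_delta n (A : 'M[F]_n) i j t :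
  A \in unitmx -> 1 + t * invmx A j i != 0 ->
  A + t *: delta_mx i j \in unitmx /\
  invmx (A + t *: delta_mx i j) =
    invmx A - (t / (1 + t * invmx A j i)) *: (invmx A *m delta_mx i j *m invmx A).
Proof.
move=> uA nz.
set B := invmx A; set d := B j i; set C := B - _ *: _.
have deltaBdelta : delta_mx i j *m B *m delta_mx i j = d *: delta_mx i j.
  apply/matrixP => x y; rewrite mulmx_deltaE delta_mulmxE !mxE [y == j]eq_sym.
  by rewrite mulrAC -natrM mulnb mulrC.
have AC1 : (A + t *: delta_mx i j) *m C = 1%:M.
  rewrite mulmxDl mulmxBr mulmxBr mulmxV // -!scalemxAl -!scalemxAr !mulmxA.
  rewrite mulmxV // mul1mx deltaBdelta -scalemxAl !scalerA.
  rewrite -addrA -[RHS]addr0; congr (_ + _).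
  rewrite -scaleNr -!scalerBl -scalerDl.
  have -> : - (t / (1 + t * d)) + (t - t * (t / (1 + t * d) * d)) = 0.
    by field.
  by rewrite scale0r.
have [uA' _] := mulmx1_unit AC1.
split=> //.
by rewrite -[LHS]mulmx1 -AC1 mulmxA mulVmx // mul1mx.
Qed.

Lemma mulmx_invmx_add_deltaE m n (M : 'M[F]_(m, n)) (A : 'M[F]_n) i j t x y :
  A \in unitmx -> 1 + t * invmx A j i != 0 ->
  (M *m invmx (A + t *: delta_mx i j)) x y =
    (M *m invmx A) x y - t / (1 + t * invmx A j i) * ((M *m invmx A) x i * invmx A j y).
Proof.
move=> uA nz; rewrite (invmx_add_delta uA nz).2 mulmxBr -scalemxAr !mulmxA.
by rewrite mxE [X in _ + X]mxE [X in - X]mxE mulmx_delta_mulmxE.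
Qed.

Lemma mulmx_invmx_add_delta_crossE m n (M : 'M[F]_(m, n)) (A : 'M[F]_n) i j t x y :
  A \in unitmx -> 1 + t * invmx A j i != 0 ->
  (M *m invmx (A + t *: delta_mx i j)) x i * invmx (A + t *: delta_mx i j) j y =
    (M *m invmx A) x i * invmx A j y / (1 + t * invmx A j i) ^+ 2.
Proof.
move=> uA nz; rewrite -[invmx (A + _)]mul1mx !mulmx_invmx_add_deltaE // !mul1mx.
by rewrite mulmx_invmx_add_deltaE //; field.
Qed.

End RankOneUpdate.

Section DirectionalDerivative.
Variables (R : realType) (V : normedModType R).

Lemma derive_along_line (f : V -> R) (Y E : V) (q : R -> R) (l : R) :
  (\forall t \near 0, f (t *: E + Y) = f Y + t * q t) -> q @ 0^' --> l ->
  derivable f Y E /\ 'D_E f Y = l.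
Proof.
move=> /nbhs_dnbhs fq ql.
have quotient_cvg : (fun h : R => h^-1 *: ((f \o shift Y) (h *: E) - f Y)) @ 0^' --> l.
  apply: cvg_trans ql; apply: near_eq_cvg; near=> h.
  have h0 : h != 0 by near: h; exact: nbhs_dnbhs_neq.
  by rewrite /= (near fq h) // addrAC subrr add0r -[h * _]/(h *: q h) scalerA mulVf // scale1r.
split; first by apply/cvg_ex; exists l.
exact: cvg_lim.
Unshelve. all: by end_near.
Qed.

Lemma affine_cvg0 (c u : R) : (fun t => c + u * t) @ 0 --> c.
Proof.
rewrite -[X in _ --> X]addr0 -[X in _ --> _ + X](mulr0 u).
by apply: cvgD; [exact: cvg_cst | apply: cvgMl_tmp; exact: cvg_id].
Qed.

Lemma near0_affine_neq0 (u : R) : \forall t \near 0, 1 + u * t != 0.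
Proof. exact: (cvgr_neq0 (1 : R) (@affine_cvg0 1 u) (oner_neq0 R)). Qed.

Lemma rational_cvg0 (c v u : R) n :
  (fun t => (c + v * t) / (1 + u * t) ^+ n) @ 0^' --> c.
Proof.
apply: cvg_within_filter.
have denom_cvg : (fun t => (1 + u * t) ^+ n) @ 0 --> (1 : R) ^+ n.
  exact: (continuous_cvg _ (@exprn_continuous R n 1) (@affine_cvg0 1 u)).
rewrite expr1n in denom_cvg.
have := cvgM (@affine_cvg0 c v) (cvgV (oner_neq0 R) denom_cvg).
by rewrite invr1 mulr1; apply.
Qed.

End DirectionalDerivative.

Section CoordinateDirections.
Variables (R : realType) (p r : nat).
Local Notation Mat := (Mat R p r).

Definition X23 (X : Mat) : 'M[R]_(r + r, p) := dsubmx (dsubmx X).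

Lemma Amat_line (E Y : Mat) t : Amat (t *: E + Y) = t *: Amat E + Amat Y.
Proof. by rewrite /Amat /X0 /X1 !linearD !linearZ /= addrACA. Qed.

Lemma X23_line (E Y : Mat) t : X23 (t *: E + Y) = t *: X23 E + X23 Y.
Proof. by rewrite /X23 !linearP. Qed.

Lemma Amat_delta_top i j : Amat (delta_mx (lshift (p + (r + r)) i) j : Mat) = delta_mx i j.
Proof. by rewrite /Amat /X0 /X1 delta_mx_ushift col_mxKu col_mxKd linear0 subr0. Qed.

Lemma X23_delta_top i j : X23 (delta_mx (lshift (p + (r + r)) i) j : Mat) = 0.
Proof. by rewrite /X23 delta_mx_ushift col_mxKd !linear0. Qed.

Lemma Amat_delta_mid i j :
  Amat (delta_mx (rshift p (lshift (r + r) i)) j : Mat) = - delta_mx i j.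
Proof.
by rewrite /Amat /X0 /X1 delta_mx_dshift delta_mx_ushift col_mxKu col_mxKd col_mxKu sub0r.
Qed.

Lemma X23_delta_mid i j : X23 (delta_mx (rshift p (lshift (r + r) i)) j : Mat) = 0.
Proof. by rewrite /X23 delta_mx_dshift delta_mx_ushift !col_mxKd. Qed.

Lemma Amat_delta_low k j : Amat (delta_mx (rshift p (rshift p k)) j : Mat) = 0.
Proof.
by rewrite /Amat /X0 /X1 !delta_mx_dshift col_mxKu col_mxKd col_mxKu subrr.
Qed.

Lemma X23_delta_low k j : X23 (delta_mx (rshift p (rshift p k)) j : Mat) = delta_mx k j.
Proof. by rewrite /X23 !delta_mx_dshift !col_mxKd. Qed.

Lemma sum_coords (F : 'I_(p + (p + (r + r))) -> R) :
  \sum_k F k = \sum_(i < p) F (lshift _ i) +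
    (\sum_(i < p) F (rshift p (lshift _ i)) + \sum_(k < r + r) F (rshift p (rshift p k))).
Proof. by rewrite !big_split_ord. Qed.

Lemma eps_lshift (i : 'I_p) : eps R (lshift (p + (r + r)) i) = -1.
Proof. by rewrite /eps /= ltn_ord. Qed.

Lemma eps_rshift (k : 'I_(p + (r + r))) : eps R (rshift p k) = 1.
Proof. by rewrite /eps /= ltnNge leq_addr. Qed.

End CoordinateDirections.

Section WAinvEntry.
Variables (R : realType) (p r : nat).
Variables (L : {linear 'M[R]_(r + r, p) -> 'M[R]_(r, p)}) (a : 'I_r) (b : 'I_p).
Local Notation Mat := (Mat R p r).

(* [L = usubmx] gives the real part X2 of W, [L = dsubmx] its imaginary part X3. *)
Definition WAinv_entry (X : Mat) : R := (L (X23 X) *m invmx (Amat X)) a b.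

Definition WAinv_cross (i j : 'I_p) (X : Mat) : R :=
  (L (X23 X) *m invmx (Amat X)) a i * invmx (Amat X) j b.

Section AlongAmat.
Variables (E : Mat) (sigma : R) (i j : 'I_p).
Hypotheses (AE : Amat E = sigma *: delta_mx i j) (X23E : X23 E = 0).

Lemma WAinv_entry_line_Amat (Y : Mat) t :
  Amat Y \in unitmx -> 1 + sigma * t * invmx (Amat Y) j i != 0 ->
  [/\ Amat (t *: E + Y) \in unitmx,
      WAinv_entry (t *: E + Y) = WAinv_entry Y -
        sigma * t / (1 + sigma * t * invmx (Amat Y) j i) * WAinv_cross i j Y
    & WAinv_cross i j (t *: E + Y) =
        WAinv_cross i j Y / (1 + sigma * t * invmx (Amat Y) j i) ^+ 2].
Proof.
move=> uA nz.
have AtE : Amat (t *: E + Y) = Amat Y + (sigma * t) *: delta_mx i j.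
  by rewrite Amat_line AE scalerA mulrC addrC.
have WtE : L (X23 (t *: E + Y)) = L (X23 Y) by rewrite X23_line X23E scaler0 add0r.
rewrite /WAinv_entry /WAinv_cross AtE WtE (invmx_add_delta uA nz).1.
by rewrite mulmx_invmx_add_deltaE // mulmx_invmx_add_delta_crossE.
Qed.

Lemma derive_WAinv_entry_Amat (Y : Mat) : Amat Y \in unitmx ->
  derivable WAinv_entry Y E /\ 'D_E WAinv_entry Y = - sigma * WAinv_cross i j Y.
Proof.
move=> uA; set d := invmx (Amat Y) j i; set c := WAinv_cross i j Y.
apply: (derive_along_line (q := fun t => (- sigma * c + 0 * t) / (1 + sigma * d * t) ^+ 1));
  last exact: rational_cvg0.
near=> t.
have nz : 1 + sigma * t * d != 0 by rewrite mulrAC; near: t; exact: near0_affine_neq0.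
have [_ -> _] := WAinv_entry_line_Amat uA nz.
by rewrite -/d -/c; field; rewrite mulrAC.
Unshelve. all: by end_near.
Qed.

Lemma derive2_WAinv_entry_Amat (Y : Mat) : Amat Y \in unitmx ->
  derivable ('D_E WAinv_entry) Y E /\
  'D_E ('D_E WAinv_entry) Y = 2 * sigma ^+ 2 * invmx (Amat Y) j i * WAinv_cross i j Y.
Proof.
move=> uA; set d := invmx (Amat Y) j i; set c := WAinv_cross i j Y.
apply: (derive_along_line (q := fun t =>
  (2 * sigma ^+ 2 * d * c + sigma ^+ 3 * d ^+ 2 * c * t) / (1 + sigma * d * t) ^+ 2));
  last exact: rational_cvg0.
near=> t.
have nz : 1 + sigma * t * d != 0 by rewrite mulrAC; near: t; exact: near0_affine_neq0.
have [uAt _ ctE] := WAinv_entry_line_Amat uA nz.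
rewrite (derive_WAinv_entry_Amat uA).2 (derive_WAinv_entry_Amat uAt).2 ctE -/d -/c.
by field; rewrite mulrAC.
Unshelve. all: by end_near.
Qed.

End AlongAmat.

Section AlongX23.
Variable E : Mat.
Hypothesis AE : Amat E = 0.

Let Amat_line_X23 (Y : Mat) t : Amat (t *: E + Y) = Amat Y.
Proof. by rewrite Amat_line AE scaler0 add0r. Qed.

Lemma derive_WAinv_entry_X23 (Y : Mat) :
  derivable WAinv_entry Y E /\ 'D_E WAinv_entry Y = (L (X23 E) *m invmx (Amat Y)) a b.
Proof.
apply: (derive_along_line (q := fun=> (L (X23 E) *m invmx (Amat Y)) a b));
  last exact: cvg_cst.
near=> t.
by rewrite /WAinv_entry Amat_line_X23 X23_line linearD linearZ /= mulmxDl -scalemxAl !mxE addrC.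
Unshelve. all: by end_near.
Qed.

Lemma derive2_WAinv_entry_X23 (Y : Mat) :
  derivable ('D_E WAinv_entry) Y E /\ 'D_E ('D_E WAinv_entry) Y = 0.
Proof.
apply: (derive_along_line (q := fun=> 0)); last exact: cvg_cst.
near=> t.
by rewrite !(derive_WAinv_entry_X23 _).2 Amat_line_X23 mulr0 addr0.
Unshelve. all: by end_near.
Qed.

End AlongX23.
End WAinvEntry.

Section CoordinateDerivatives.
Variables (R : realType) (p r : nat).
Variables (L L' : {linear 'M[R]_(r + r, p) -> 'M[R]_(r, p)}) (a a' : 'I_r) (b b' : 'I_p).
Local Notation Mat := (Mat R p r).
Local Notation f := (WAinv_entry L a b).
Local Notation g := (WAinv_entry L' a' b').
Variable X : Mat.
Hypothesis uA : Amat X \in unitmx.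

Let dir_top i j : Amat (delta_mx (lshift (p + (r + r)) i) j : Mat) = 1 *: delta_mx i j /\
  X23 (delta_mx (lshift (p + (r + r)) i) j : Mat) = 0.
Proof. by rewrite Amat_delta_top scale1r X23_delta_top. Qed.

Let dir_mid i j : Amat (delta_mx (rshift p (lshift (r + r) i)) j : Mat) = -1 *: delta_mx i j /\
  X23 (delta_mx (rshift p (lshift (r + r) i)) j : Mat) = 0.
Proof. by rewrite Amat_delta_mid scaleN1r X23_delta_mid. Qed.

Lemma WAinv_entry_coord_twice_derivable k j :
  derivable f X (delta_mx k j) /\ derivable (pd k j f) X (delta_mx k j).
Proof.
case: (split_ordP k) => [i ->|k' ->].
  have [AE X23E] := dir_top i j.
  exact: conj (derive_WAinv_entry_Amat L a b AE X23E uA).1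
              (derive2_WAinv_entry_Amat L a b AE X23E uA).1.
case: (split_ordP k') => [i ->|l ->].
  have [AE X23E] := dir_mid i j.
  exact: conj (derive_WAinv_entry_Amat L a b AE X23E uA).1
              (derive2_WAinv_entry_Amat L a b AE X23E uA).1.
have AE := @Amat_delta_low R p r l j.
exact: conj (derive_WAinv_entry_X23 L a b AE X).1 (derive2_WAinv_entry_X23 L a b AE X).1.
Qed.

Lemma rtau_WAinv_entry : rtau f X = 0.
Proof.
rewrite /rtau sum_coords.
set S := \sum_(i < p) \sum_(j < p) 2 * invmx (Amat X) j i * WAinv_cross L a b i j X.
have top : \sum_(i < p) \sum_(j < p) eps R (lshift (p + (r + r)) i) *
    pd (lshift _ i) j (pd (lshift _ i) j f) X = - S.
  rewrite /S -sumrN; apply: eq_bigr => i _; rewrite -sumrN; apply: eq_bigr => j _.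
  rewrite eps_lshift mulN1r /pd.
  have [AE X23E] := dir_top i j.
  by rewrite (derive2_WAinv_entry_Amat L a b AE X23E uA).2 expr1n mulr1.
have mid : \sum_(i < p) \sum_(j < p) eps R (rshift p (lshift (r + r) i)) *
    pd (rshift p (lshift _ i)) j (pd (rshift p (lshift _ i)) j f) X = S.
  apply: eq_bigr => i _; apply: eq_bigr => j _.
  rewrite eps_rshift mul1r /pd.
  have [AE X23E] := dir_mid i j.
  by rewrite (derive2_WAinv_entry_Amat L a b AE X23E uA).2 sqrrN expr1n mulr1.
have low : \sum_(k < r + r) \sum_(j < p) eps R (rshift p (rshift p k)) *
    pd (rshift p (rshift p k)) j (pd (rshift p (rshift p k)) j f) X = 0.
  apply: big1 => k _; apply: big1 => j _.
  by rewrite /pd (derive2_WAinv_entry_X23 L a b (@Amat_delta_low R p r k j) X).2 mulr0.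
by rewrite [X in X + _]top [X in _ + (X + _)]mid [X in _ + (_ + X)]low addr0 addNr.
Qed.

Lemma rkappa_WAinv_entry : rkappa f g X =
  \sum_(k < r + r) \sum_(j < p)
    (L (delta_mx k j) *m invmx (Amat X)) a b * (L' (delta_mx k j) *m invmx (Amat X)) a' b'.
Proof.
rewrite /rkappa sum_coords.
set T := \sum_(i < p) \sum_(j < p) WAinv_cross L a b i j X * WAinv_cross L' a' b' i j X.
have top : \sum_(i < p) \sum_(j < p) eps R (lshift (p + (r + r)) i) *
    (pd (lshift _ i) j f X * pd (lshift _ i) j g X) = - T.
  rewrite /T -sumrN; apply: eq_bigr => i _; rewrite -sumrN; apply: eq_bigr => j _.
  rewrite eps_lshift mulN1r /pd.
  have [AE X23E] := dir_top i j.
  rewrite (derive_WAinv_entry_Amat L a b AE X23E uA).2.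
  by rewrite (derive_WAinv_entry_Amat L' a' b' AE X23E uA).2 !mulN1r mulrNN.
have mid : \sum_(i < p) \sum_(j < p) eps R (rshift p (lshift (r + r) i)) *
    (pd (rshift p (lshift _ i)) j f X * pd (rshift p (lshift _ i)) j g X) = T.
  apply: eq_bigr => i _; apply: eq_bigr => j _.
  rewrite eps_rshift mul1r /pd.
  have [AE X23E] := dir_mid i j.
  rewrite (derive_WAinv_entry_Amat L a b AE X23E uA).2.
  by rewrite (derive_WAinv_entry_Amat L' a' b' AE X23E uA).2 opprK !mul1r.
have low : \sum_(k < r + r) \sum_(j < p) eps R (rshift p (rshift p k)) *
    (pd (rshift p (rshift p k)) j f X * pd (rshift p (rshift p k)) j g X) =
  \sum_(k < r + r) \sum_(j < p)
    (L (delta_mx k j) *m invmx (Amat X)) a b * (L' (delta_mx k j) *m invmx (Amat X)) a' b'.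
  apply: eq_bigr => k _; apply: eq_bigr => j _.
  have AE := @Amat_delta_low R p r k j.
  rewrite eps_rshift mul1r /pd (derive_WAinv_entry_X23 L a b AE X).2.
  by rewrite (derive_WAinv_entry_X23 L' a' b' AE X).2 X23_delta_low.
by rewrite [X in X + _]top [X in _ + (X + _)]mid [X in _ + (_ + X)]low addrA addNr add0r.
Qed.

End CoordinateDerivatives.

Section GLpAction.
Variables (R : realType) (p r : nat).
Local Notation Mat := (Mat R p r).

Definition Ups_form (X : Mat) : 'M[R]_p :=
  - ((X0 X)^T *m X0 X) + (X1 X)^T *m X1 X + (X2 X)^T *m X2 X + (X3 X)^T *m X3 X.

Lemma trmx_mul_self_ge0 k (u : 'cV[R]_k) : 0 <= (u^T *m u) 0 0.
Proof. by rewrite mxE; apply: sumr_ge0 => l _; rewrite mxE -expr2 sqr_ge0. Qed.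

Lemma Ups_unit (X : Mat) : Ups X -> Amat X \in unitmx.
Proof.
move=> negX; apply: contraT => singular.
have /det0P [v v0 vA] : \det (Amat X)^T == 0.
  by rewrite det_tr; move: singular; rewrite unitmxE unitfE negbK.
have w0 : v^T != 0 by rewrite -(inj_eq trmx_inj) trmxK trmx0.
have X01 : X0 X *m v^T = X1 X *m v^T.
  by apply/eqP; rewrite -subr_eq0 -mulmxBl -/(Amat X) -[Amat X]trmxK -trmx_mul vA trmx0.
have gram k (U : 'M[R]_(k, p)) : v^T^T *m (U^T *m U) *m v^T = (U *m v^T)^T *m (U *m v^T).
  by rewrite trmx_mul !mulmxA.
have := negX _ w0.
rewrite !mulmxDr !mulmxDl mulmxN mulNmx !gram X01 addNr add0r mxE.
have := trmx_mul_self_ge0 (X2 X *m v^T); have := trmx_mul_self_ge0 (X3 X *m v^T).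
lra.
Qed.

Lemma X0_mulmx (X : Mat) (g : 'M[R]_p) : X0 (X *m g) = X0 X *m g.
Proof. by rewrite /X0 mul_usub_mx. Qed.

Lemma X1_mulmx (X : Mat) (g : 'M[R]_p) : X1 (X *m g) = X1 X *m g.
Proof. by rewrite /X1 mul_usub_mx mul_dsub_mx. Qed.

Lemma X2_mulmx (X : Mat) (g : 'M[R]_p) : X2 (X *m g) = X2 X *m g.
Proof. by rewrite /X2 mul_usub_mx !mul_dsub_mx. Qed.

Lemma X3_mulmx (X : Mat) (g : 'M[R]_p) : X3 (X *m g) = X3 X *m g.
Proof. by rewrite /X3 !mul_dsub_mx. Qed.

Lemma Ups_form_mulmx (X : Mat) (g : 'M[R]_p) :
  Ups_form (X *m g) = g^T *m Ups_form X *m g.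
Proof.
have gram k (U : 'M[R]_(k, p)) : (U *m g)^T *m (U *m g) = g^T *m (U^T *m U) *m g.
  by rewrite trmx_mul !mulmxA.
rewrite /Ups_form X0_mulmx X1_mulmx X2_mulmx X3_mulmx !gram.
by rewrite !mulmxDr !mulmxDl mulmxN mulNmx.
Qed.

Lemma negdef_congr (M g : 'M[R]_p) : negdef M -> g \in unitmx -> negdef (g^T *m M *m g).
Proof.
move=> negM ug v v0.
have gv0 : g *m v != 0.
  by apply: contra v0 => /eqP gv; rewrite -[v](mulKmx ug) gv mulmx0.
by rewrite !mulmxA -trmx_mul -!mulmxA mulmxA negM.
Qed.

Lemma Ups_mulmx (X : Mat) (g : 'M[R]_p) : Ups X -> g \in unitmx -> Ups (X *m g).
Proof.
move=> UX ug; change (negdef (Ups_form (X *m g))).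
by rewrite Ups_form_mulmx; apply: negdef_congr.
Qed.

Lemma mulmx_invmx_Amat_mulmx k (W : 'M[R]_(k, p)) (X : Mat) (g : 'M[R]_p) :
  Amat X \in unitmx -> g \in unitmx ->
  W *m g *m invmx (Amat (X *m g)) = W *m invmx (Amat X).
Proof.
move=> uA ug.
have Ag : Amat (X *m g) = Amat X *m g by rewrite /Amat X0_mulmx X1_mulmx mulmxBl.
rewrite Ag -{1}[W](mulmxKV uA) -[_ *m Amat X *m g]mulmxA mulmxK //.
by rewrite unitmx_mul uA.
Qed.

End GLpAction.

Section PhiComponents.
Variables (R : realType) (p r : nat).
Local Notation Mat := (Mat R p r).

Lemma sum_delta_usubmx_dsubmx (F : 'M[R]_(r, p) -> 'M[R]_(r, p) -> R) :
  \sum_(k < r + r) \sum_(j < p)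
    F (usubmx (delta_mx k j : 'M[R]_(r + r, p)))
      (dsubmx (delta_mx k j : 'M[R]_(r + r, p))) =
  \sum_(i < r) \sum_(j < p) (F (delta_mx i j) 0 + F 0 (delta_mx i j)).
Proof.
rewrite big_split_ord /= -big_split; apply: eq_bigr => i _.
rewrite -big_split; apply: eq_bigr => j _.
by rewrite delta_mx_ushift delta_mx_dshift !col_mxKu !col_mxKd.
Qed.

Lemma ctau_Phi_comp a b (X : Mat) : Amat X \in unitmx ->
  (ctau (@Phi_comp R p r a b)).1 X = 0 /\ (ctau (@Phi_comp R p r a b)).2 X = 0.
Proof.
move=> uA.
by split; [exact: (rtau_WAinv_entry usubmx a b uA) | exact: (rtau_WAinv_entry dsubmx a b uA)].
Qed.

Lemma ckappa_Phi_comp a b a' b' (X : Mat) : Amat X \in unitmx ->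
  (ckappa (@Phi_comp R p r a b) (@Phi_comp R p r a' b')).1 X = 0 /\
  (ckappa (@Phi_comp R p r a b) (@Phi_comp R p r a' b')).2 X = 0.
Proof.
move=> uA.
set h := fun M N : 'M[R]_(r, p) =>
  (M *m invmx (Amat X)) a b * (N *m invmx (Amat X)) a' b'.
have h0l M : h 0 M = 0 by rewrite /h mul0mx mxE mul0r.
have h0r M : h M 0 = 0 by rewrite /h mul0mx [X in _ * X]mxE mulr0.
split.
  change (rkappa (WAinv_entry usubmx a b) (WAinv_entry usubmx a' b') X -
          rkappa (WAinv_entry dsubmx a b) (WAinv_entry dsubmx a' b') X = 0).
  rewrite !rkappa_WAinv_entry // -sumrB.
  under eq_bigr do rewrite -sumrB.
  rewrite (sum_delta_usubmx_dsubmx (fun U D => h U U - h D D)).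
  by apply: big1 => i _; apply: big1 => j _; rewrite h0l subr0 add0r subrr.
change (rkappa (WAinv_entry usubmx a b) (WAinv_entry dsubmx a' b') X +
        rkappa (WAinv_entry dsubmx a b) (WAinv_entry usubmx a' b') X = 0).
rewrite !rkappa_WAinv_entry // -big_split.
under eq_bigr do rewrite -big_split.
rewrite (sum_delta_usubmx_dsubmx (fun U D => h U D + h D U)).
by apply: big1 => i _; apply: big1 => j _; rewrite !h0l !h0r !addr0.
Qed.

Lemma Phi_comp_GLp_invariant a b : GLp_invariant (@Ups R p r) (@Phi_comp R p r a b).
Proof.
move=> X g UX ug; have uA := Ups_unit UX.
split; first exact: Ups_mulmx.
by rewrite /= /PhiRe /PhiIm X2_mulmx X3_mulmx !mulmx_invmx_Amat_mulmx.
Qed.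

Lemma Phi_comp_coord_twice_derivable a b :
  coord_twice_derivable (@Ups R p r) (@Phi_comp R p r a b).1 /\
  coord_twice_derivable (@Ups R p r) (@Phi_comp R p r a b).2.
Proof.
split=> X /Ups_unit uA k j.
  exact: (WAinv_entry_coord_twice_derivable usubmx a b uA).
exact: (WAinv_entry_coord_twice_derivable dsubmx a b uA).
Qed.

End PhiComponents.

Theorem proposition5p2 (R : realType) (p r : nat) (hp : (0 < p)%N) (hr : (0 < r)%N) :
  orthogonal_harmonic_family (@Ups R p r) (@Phi_components R p r) /\
  (forall phi, @Phi_components R p r phi ->
     GLp_invariant (@Ups R p r) phi /\
     coord_twice_derivable (@Ups R p r) phi.1 /\
     coord_twice_derivable (@Ups R p r) phi.2).
Proof.
split.
  move=> _ _ [a _ [b _ <-]] [a' _ [b' _ <-]].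
  by split=> X /Ups_unit uA; [exact: ctau_Phi_comp | exact: ckappa_Phi_comp].
move=> _ [a _ [b _ <-]].
split; [exact: Phi_comp_GLp_invariant | exact: Phi_comp_coord_twice_derivable].
Qed.
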